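(* For positive integers $p,q,r,s$, the transition maps satisfy: (1) $T^{p,q}_{r,s}:\Lambda^{p,q}\to\Lambda^{r,s}$ is well-defined; (2) $T^{p,q}_{r,s}$ is order-preserving; (3) $T^{r,s}_{p,q}\circ T^{p,q}_{r,s}\le\mathrm{id}_{\Lambda^{p,q}}$ (pointwise); (4) $T^{r,s}_{p,q}\circ T^{p,q}_{r,s}=\mathrm{id}_{\Lambda^{p,q}}$ if $p\le r$ and $q\le s$; (5) $(T^{p,q}_{r,s})^{-1}(0)=\{0\}$ if $p,q,r,s\ge 2$.
   Context: $\mathbb{N}=\{0,1,2,\dots\}$. For positive integers $p,q$, $\Lambda^{p,q}=\langle a,b\mid pa=qb\rangle$ is the quotient of the free commutative monoid $\mathbb{N}a\oplus\mathbb{N}b$ by the congruence generated by $\lambda+pa\sim\lambda+qb$; it is ordered by $\lambda\le\mu$ iff $\lambda+\nu=\mu$ for some $\nu\in\Lambda^{p,q}$. The transition function $\tau^p_q:\mathbb{N}\to\mathbb{N}$ is $\tau^p_q(mp+n)=mq+\min\{n,q-1\}$ ($m\in\mathbb{N}$, $0\le n<p$). The transition map $T^{p,q}_{r,s}:\Lambda^{p,q}\to\Lambda^{r,s}$ is defined by $T^{p,q}_{r,s}(ma+nb)=\tau^p_r(m)a+\tau^q_s(n)b$ for $m,n\in\mathbb{N}$. For maps $f,g$ into a poset, $f\le g$ means $f(x)\le g(x)$ for all $x$. *)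

From mathcomp Require Import all_boot.
From Stdlib Require Import Relations.
Set Implicit Arguments. Unset Strict Implicit. Unset Printing Implicit Defensive.

(* An element m a + n b of the free commutative monoid N a (+) N b is the pair (m, n). *)
Definition fmon := (nat * nat)%type.
Definition fadd (x y : fmon) : fmon := (x.1 + y.1, x.2 + y.2).

Inductive gen_rel (p q : nat) : fmon -> fmon -> Prop :=
| gen_rel_intro (m n : nat) : gen_rel p q (m + p, n) (m, n + q).

(* The congruence generated by gen_rel: its reflexive-symmetric-transitive
   closure (gen_rel is translation invariant, so this closure is already
   compatible with addition, i.e. it is the generated congruence). *)
Definition lam_eq (p q : nat) : relation fmon := clos_refl_sym_trans fmon (gen_rel p q).

Definition lam_le (p q : nat) (x y : fmon) : Prop :=
  exists v : fmon, lam_eq p q (fadd x v) y.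

Definition tau (p q : nat) (k : nat) : nat := (k %/ p) * q + minn (k %% p) q.-1.

Definition trans_map (p q r s : nat) (x : fmon) : fmon := (tau p r x.1, tau q s x.2).

From mathcomp Require Import all_boot zify.
From Stdlib Require Import Relations.

Set Implicit Arguments.
Unset Strict Implicit.

(* tau^p_q sends the p-block structure of N onto the q-block structure: it
   shifts by q when its argument shifts by p, so T^{p,q}_{r,s} maps generating
   pairs of Lambda^{p,q} to generating pairs of Lambda^{r,s}.  It is monotone,
   and tau^r_p o tau^p_r only truncates the remainder mod p to r - 1, which
   is harmless when p <= r.  Finally the class of 0 in Lambda^{p,q} is {0}
   (the normal form (m mod p, n + (m div p) q) is an invariant), and
   tau^p_r vanishes only at 0 as soon as r >= 2. *)

Lemma tauE p q d e : e < p -> tau p q (d * p + e) = d * q + minn e q.-1.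
Proof.
move=> ltep; rewrite /tau modnMDl modn_small //.
by rewrite [d * p + e]addnC divnDMl ?(leq_ltn_trans _ ltep) // divn_small.
Qed.

Lemma tau0 p q : tau p q 0 = 0.
Proof. by rewrite /tau div0n mod0n mul0n min0n. Qed.

Lemma tauDp p q k : 0 < p -> tau p q (k + p) = tau p q k + q.
Proof.
move=> p_gt0; rewrite {1}(divn_eq k p) addnAC -mulSnr tauE ?ltn_pmod //.
by rewrite /tau mulSnr addnAC.
Qed.

Lemma tau_monotone p q : 0 < p -> {homo tau p q : k k' / k <= k'}.
Proof.
move=> p_gt0 k k' lekk'; rewrite /tau.
have := leq_div2r p lekk'; rewrite leq_eqVlt => /orP[/eqP eq_div | lt_div].
- move: lekk'; rewrite {1}(divn_eq k p) {1}(divn_eq k' p) eq_div leq_add2l.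
  by rewrite leq_add2l; lia.
- have : (k %/ p).+1 * q <= k' %/ p * q by rewrite leq_mul2r lt_div orbT.
  rewrite mulSn; lia.
Qed.

Lemma tau_eq0 p q k : 0 < p -> 1 < q -> (tau p q k == 0) = (k == 0).
Proof.
move=> p_gt0 q_gt1; rewrite /tau {3}(divn_eq k p) !addn_eq0 !muln_eq0.
rewrite (gtn_eqF p_gt0) (gtn_eqF (ltnW q_gt1)) !orbF; congr andb.
by apply/eqP/eqP; lia.
Qed.

Lemma tau_roundtrip p r m : 0 < p -> 0 < r ->
  tau r p (tau p r m) = m %/ p * p + minn (m %% p) r.-1.
Proof.
move=> p_gt0 r_gt0; have := ltn_pmod m p_gt0.
by rewrite [tau p r m]/tau tauE; lia.
Qed.

Lemma tau_roundtrip_le p r m : 0 < p -> 0 < r -> tau r p (tau p r m) <= m.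
Proof.
move=> p_gt0 r_gt0; rewrite tau_roundtrip // {3}(divn_eq m p) leq_add2l.
exact: geq_minl.
Qed.

Lemma tau_roundtrip_id p r m : 0 < p -> p <= r -> tau r p (tau p r m) = m.
Proof.
move=> p_gt0 lepr; have ltmp := ltn_pmod m p_gt0.
rewrite tau_roundtrip ?(leq_trans p_gt0) //.
have -> : minn (m %% p) r.-1 = m %% p by lia.
by rewrite -divn_eq.
Qed.

Lemma lam_eq_map p q r s (f : fmon -> fmon) :
    (forall x y, gen_rel p q x y -> gen_rel r s (f x) (f y)) ->
  forall x y, lam_eq p q x y -> lam_eq r s (f x) (f y).
Proof.
move=> f_gen x y; elim=> {x y} [x y gxy | x | x y _ eyx | x y z _ exy _ eyz].
- exact/rst_step/f_gen.
- exact: rst_refl.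
- exact: rst_sym.
- exact: rst_trans exy eyz.
Qed.

Lemma lam_eq_trans_map p q r s x y : 0 < p -> 0 < q ->
  lam_eq p q x y -> lam_eq r s (trans_map p q r s x) (trans_map p q r s y).
Proof.
move=> p_gt0 q_gt0; apply: lam_eq_map => {x y} _ _ [m n].
by rewrite /trans_map /= !tauDp //; apply: gen_rel_intro.
Qed.

Lemma lam_le_leq p q x y : x.1 <= y.1 -> x.2 <= y.2 -> lam_le p q x y.
Proof.
case: x y => [a b] [c d] /= leac lebd; exists (c - a, d - b).
by rewrite /fadd /= !subnKC //; apply: rst_refl.
Qed.

Lemma lam_le_eq p q x y z : lam_le p q x y -> lam_eq p q y z -> lam_le p q x z.
Proof. by move=> [v exvy] eyz; exists v; apply: rst_trans exvy eyz. Qed.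

Lemma lam_le_trans_map p q r s x y : 0 < p -> 0 < q ->
  lam_le p q x y -> lam_le r s (trans_map p q r s x) (trans_map p q r s y).
Proof.
move=> p_gt0 q_gt0 [v exvy].
apply: lam_le_eq (lam_eq_trans_map r s p_gt0 q_gt0 exvy).
by apply: lam_le_leq; apply: tau_monotone => //; apply: leq_addr.
Qed.

Definition lam_nf p q (x : fmon) : fmon := (x.1 %% p, x.2 + x.1 %/ p * q).

Lemma lam_nf_invariant p q x y : 0 < p -> lam_eq p q x y -> lam_nf p q x = lam_nf p q y.
Proof.
move=> p_gt0; elim=> {x y} [_ _ [m n] | x | x y _ -> | x y z _ -> _ ->] //.
rewrite /lam_nf /= modnDr divnDr ?dvdnn // divnn p_gt0.
by congr pair; lia.
Qed.

Lemma lam_eq0 p q x : 0 < p -> 0 < q -> lam_eq p q x (0, 0) -> x = (0, 0).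
Proof.
move=> p_gt0 q_gt0 /(lam_nf_invariant p_gt0); case: x => m n.
rewrite /lam_nf /= mod0n div0n => -[mod0 /eqP].
rewrite addn_eq0 muln_eq0 (gtn_eqF q_gt0) orbF => /andP[/eqP-> /eqP div0].
by rewrite (divn_eq m p) div0 mod0.
Qed.

Unset Implicit Arguments.

Theorem proposition2p4 (p q r s : nat) :
  0 < p -> 0 < q -> 0 < r -> 0 < s ->
  (forall x y : fmon, lam_eq p q x y ->
     lam_eq r s (trans_map p q r s x) (trans_map p q r s y)) /\
  (forall x y : fmon, lam_le p q x y ->
     lam_le r s (trans_map p q r s x) (trans_map p q r s y)) /\
  (forall x : fmon, lam_le p q (trans_map r s p q (trans_map p q r s x)) x) /\
  (p <= r -> q <= s ->
     forall x : fmon, lam_eq p q (trans_map r s p q (trans_map p q r s x)) x) /\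
  (2 <= p -> 2 <= q -> 2 <= r -> 2 <= s ->
     forall x : fmon, lam_eq r s (trans_map p q r s x) (0, 0) <-> lam_eq p q x (0, 0)).
Proof.
move=> p_gt0 q_gt0 r_gt0 s_gt0; split; last split; last split; last split.
- by move=> x y; apply: lam_eq_trans_map.
- by move=> x y; apply: lam_le_trans_map.
- by move=> x; apply: lam_le_leq; apply: tau_roundtrip_le.
- move=> lepr leqs [m n].
  by rewrite /trans_map /= !tau_roundtrip_id //; apply: rst_refl.
(* Only the target exponents r, s need to be at least 2. *)
move=> _ _ r_gt1 s_gt1 [m n]; split=> [/(lam_eq0 r_gt0 s_gt0) | /(lam_eq0 p_gt0 q_gt0)].
- rewrite /trans_map /= => -[/eqP tm0 /eqP tn0].
  rewrite tau_eq0 // in tm0; rewrite tau_eq0 // in tn0.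
  by rewrite (eqP tm0) (eqP tn0); apply: rst_refl.
- by move=> [-> ->]; rewrite /trans_map /= !tau0; apply: rst_refl.
Qed.
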